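(* The rational functions $A_G(t/|G|)$ and $B_G(t/|G|)$ are family invariants of the finite group $G$; that is, if $G$ and $H$ are isoclinic finite groups, then $A_G(t/|G|)=A_H(t/|H|)$ and $B_G(t/|G|)=B_H(t/|H|)$.
   Context: For a finite group $G$ and $n\ge 0$, $G$ acts on $G^n$ by simultaneous conjugation. Let $G^{(n)}\subseteq G^n$ be the set of $n$-tuples of pairwise commuting elements. Let $\alpha_{G,n}$ (resp. $\beta_{G,n}$) be the number of $G$-orbits on $G^n$ (resp. on $G^{(n)}$), and set $A_G(t)=\sum_{n\ge0}\alpha_{G,n}t^n$, $B_G(t)=\sum_{n\ge0}\beta_{G,n}t^n$ (rational functions of $t$). Two finite groups $G$ and $H$ are isoclinic if there exist isomorphisms $\theta:G/Z(G)\to H/Z(H)$ and $\phi:G'\to H'$ (commutator subgroups) such that $\phi([g_1,g_2])=[h_1,h_2]$ whenever $\theta(g_iZ(G))=h_iZ(H)$, $i=1,2$. A family invariant is a quantity depending on a group that takes the same value on any two isoclinic groups. *)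

From mathcomp Require Import all_boot all_order all_algebra all_fingroup all_solvable.
Set Implicit Arguments.
Unset Strict Implicit.
Unset Printing Implicit Defensive.
Import GRing.Theory.
Local Open Scope group_scope.

Section Defs.
Variable gT : finGroupType.

Definition tuples_in (G : {group gT}) (n : nat) : {set {ffun 'I_n -> gT}} :=
  [set t : {ffun 'I_n -> gT} | [forall i, t i \in G]].

Definition comm_tuples_in (G : {group gT}) (n : nat) : {set {ffun 'I_n -> gT}} :=
  [set t : {ffun 'I_n -> gT} | [forall i, t i \in G] &&
     [forall i, forall j, t i * t j == t j * t i]].

Definition conj_tuple (n : nat) (t : {ffun 'I_n -> gT}) (g : gT) : {ffun 'I_n -> gT} :=
  [ffun i => t i ^ g].

Definition conj_orbit (G : {group gT}) (n : nat) (t : {ffun 'I_n -> gT}) :=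
  [set conj_tuple t g | g in G].

Definition alpha (G : {group gT}) (n : nat) : nat :=
  #|[set conj_orbit G t | t in tuples_in G n]|.

Definition beta (G : {group gT}) (n : nat) : nat :=
  #|[set conj_orbit G t | t in comm_tuples_in G n]|.
End Defs.

Definition isoclinic (gT hT : finGroupType) (G : {group gT}) (H : {group hT}) : Prop :=
  exists (theta : {morphism G / 'Z(G) >-> coset_of 'Z(H)})
         (phi : {morphism G^`(1) >-> hT}),
  [/\ isom (G / 'Z(G)) (H / 'Z(H)) theta,
      isom G^`(1) H^`(1) phi &
      forall g1 g2 h1 h2, g1 \in G -> g2 \in G -> h1 \in H -> h2 \in H ->
        theta (coset 'Z(G) g1) = coset 'Z(H) h1 ->
        theta (coset 'Z(G) g2) = coset 'Z(H) h2 ->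
        phi [~ g1, g2] = [~ h1, h2]].

From mathcomp Require Import all_boot all_order all_algebra all_fingroup all_solvable.
From mathcomp Require Import ring.
Import GRing.Theory Num.Theory.
Set Implicit Arguments.
Unset Strict Implicit.
Unset Printing Implicit Defensive.

(* By the Cauchy-Frobenius lemma, |G| alpha_{G,n} (resp. |G| beta_{G,n}) is the
   number of pairs (g, t) with t an n-tuple (resp. a commuting n-tuple) of
   elements commuting with g.  Since [z1 x, z2 y] = [x, y] for central z1, z2,
   whether two elements commute only depends on their classes modulo Z(G), so
   this number is |Z(G)|^(n+1) times the number N of the corresponding
   "commutation patterns" (a, s) in (G/Z(G))^(1+n).  Hence
   alpha_{G,n} / |G|^n = N / |G/Z(G)|^(n+1).  An isoclinism maps G/Z(G) onto
   H/Z(H) and transports the commutator map through the injective phi, so it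
   preserves commutation patterns and N. *)

Section RelTuples.
Variables (T : finType) (n : nat) (r : rel T) (b : bool).

(* With [r] the commutation relation, [rel_pattern a s] says that [s] is fixed
   by conjugation by [a] and, when [b] holds, that [s] is a commuting tuple. *)
Definition rel_pattern (a : T) (s : {ffun 'I_n -> T}) : bool :=
  [forall i, r (s i) a] && (b ==> [forall i, forall j, r (s i) (s j)]).

Definition rel_tuples (D : {set T}) (a : T) : {set {ffun 'I_n -> T}} :=
  [set s : {ffun 'I_n -> T} | [forall i, s i \in D] && rel_pattern a s].

End RelTuples.

Lemma rel_pattern_map (A B : finType) (f : A -> B) (D : {set A})
    (r : rel A) (r' : rel B) n b a (s : {ffun 'I_n -> A}) :
    {in D &, forall x y, r' (f x) (f y) = r x y} ->
    a \in D -> (forall i, s i \in D) ->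
  rel_pattern r' b (f a) [ffun i => f (s i)] = rel_pattern r b a s.
Proof.
move=> f_rel Da Ds; congr andb.
  by apply: eq_forallb => i; rewrite ffunE f_rel.
congr implb; apply: eq_forallb => i; apply: eq_forallb => j.
by rewrite !ffunE f_rel.
Qed.

Section Fibers.
Variables (A B : finType) (f : A -> B) (D : {set A}) (E : {set B}) (k : nat).
Hypothesis f_into : {in D, forall x, f x \in E}.
Hypothesis card_fiber : {in E, forall y, #|[set x in D | f x == y]| = k}.

Lemma sum_fibers (F : B -> nat) : \sum_(x in D) F (f x) = k * \sum_(y in E) F y.
Proof.
rewrite (partition_big f [in E]) //= big_distrr; apply: eq_bigr => y Ey.
rewrite (eq_bigr (fun=> F y)) => [|x /andP[_ /eqP->] //].
rewrite sum_nat_const -(card_fiber Ey); congr (_ * _).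
by apply: eq_card => x; rewrite inE.
Qed.

Lemma card_ffun_fiber (I : finType) (s : {ffun I -> B}) :
    (forall i, s i \in E) ->
  #|[set t : {ffun I -> A} | [forall i, t i \in D] && ([ffun i => f (t i)] == s)]|
  = k ^ #|I|.
Proof.
move=> Es; pose F i := [pred x | (x \in D) && (f x == s i)].
rewrite (eq_card (B := family F)) => [|t]; last first.
  rewrite inE; apply/andP/familyP => [[/forallP Dt /eqP es] i | Ft].
    by rewrite /F inE Dt -es ffunE eqxx.
  split; first by apply/forallP => i; have /andP[] := Ft i.
  by apply/eqP/ffunP => i; rewrite ffunE; have /andP[_ /eqP] := Ft i.
rewrite card_family /image_mem (eq_map (g := fun=> k)) => [|i]; last first.
  by rewrite -(card_fiber (Es i)); apply: eq_card => x; rewrite inE.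
by rewrite cardE; elim: (enum I) => //= _ ? ->; rewrite expnS.
Qed.

Lemma card_ffun_fibers (I : finType) (P : pred {ffun I -> B}) :
  #|[set t : {ffun I -> A} | [forall i, t i \in D] && P [ffun i => f (t i)]]|
  = k ^ #|I| * #|[set s : {ffun I -> B} | [forall i, s i \in E] && P s]|.
Proof.
rewrite mulnC -sum_nat_const -sum1_card.
rewrite (partition_big (fun t : {ffun I -> A} => [ffun i => f (t i)])
  [in [set s : {ffun I -> B} | [forall i, s i \in E] && P s]]) /=; last first.
  move=> t; rewrite !inE => /andP[/forallP Dt ->]; rewrite andbT.
  by apply/forallP => i; rewrite ffunE f_into.
apply: eq_bigr => s; rewrite inE => /andP[/forallP Es Ps].
rewrite -(card_ffun_fiber Es) -sum1_card; apply: eq_bigl => t; rewrite !inE.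
by case: eqP => [->|]; rewrite ?Ps ?andbF ?andbT.
Qed.

Lemma card_rel_tuples_fibers (r : rel A) (r' : rel B) n b a :
    {in D &, forall x y, r' (f x) (f y) = r x y} -> a \in D ->
  #|rel_tuples n r b D a| = k ^ n * #|rel_tuples n r' b E (f a)|.
Proof.
move=> f_rel Da; rewrite -[in k ^ n](card_ord n) -card_ffun_fibers.
apply: eq_card => t; rewrite !inE.
case: (boolP [forall i, t i \in D]) => //= /forallP Dt.
by rewrite (rel_pattern_map b f_rel).
Qed.

End Fibers.

Definition commb {gT : finGroupType} (x y : gT) : bool := ([~ x, y] == 1)%g.

Section ConjugationAction.
Variables (gT : finGroupType) (n : nat).
Local Open Scope group_scope.

Lemma commbE (x y : gT) : (x * y == y * x) = commb x y.
Proof. by apply/eqP/commgP. Qed.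

Lemma conj_tuple1 : (@conj_tuple gT n)^~ 1 =1 id.
Proof. by move=> t; apply/ffunP => i; rewrite ffunE conjg1. Qed.

Lemma conj_tupleM t : act_morph (@conj_tuple gT n) t.
Proof. by move=> g h; apply/ffunP => i; rewrite !ffunE conjgM. Qed.

Definition conj_tuple_action := TotalAction conj_tuple1 conj_tupleM.

Lemma afix_conj_tuple t g :
  (t \in 'Fix_conj_tuple_action[g]) = [forall i, commb (t i) g].
Proof.
apply/afix1P/forallP => [tg i | tg].
  by apply/conjg_fixP; rewrite -{2}tg ffunE.
by apply/ffunP => i; rewrite ffunE; apply/conjg_fixP/tg.
Qed.

Definition conj_domain (b : bool) (G : {group gT}) : {set {ffun 'I_n -> gT}} :=
  if b then comm_tuples_in G n else tuples_in G n.

Definition conj_orbits b (G : {group gT}) : nat :=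
  #|orbit conj_tuple_action G @: conj_domain b G|.

Lemma conj_domain_acts b (G : {group gT}) :
  [acts G, on conj_domain b G | conj_tuple_action].
Proof.
apply/actsP => g Gg t; rewrite /conj_domain; case: b; rewrite !inE; last first.
  by apply: eq_forallb => i; rewrite ffunE groupJr.
congr andb; first by apply: eq_forallb => i; rewrite ffunE groupJr.
apply: eq_forallb => i; apply: eq_forallb => j; rewrite !ffunE -!conjMg.
by rewrite (inj_eq (@conjg_inj _ g)).
Qed.

Lemma afix_conj_domain b (G : {group gT}) g :
  'Fix_(conj_domain b G | conj_tuple_action)[g] = rel_tuples n commb b G g.
Proof.
apply/setP => t; rewrite in_setI afix_conj_tuple /conj_domain.
case: b; rewrite !inE /rel_pattern /= ?andbT //.
rewrite -andbA [_ && [forall i, commb _ g]]andbC; do 2!congr andb.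
by apply: eq_forallb => i; apply: eq_forallb => j; rewrite commbE.
Qed.

End ConjugationAction.

Definition qcommb {gT : finGroupType} {K : {set gT}} (a c : coset_of K) : bool :=
  commb (repr a) (repr c).

Section CentralQuotient.
Variables (gT : finGroupType) (G : {group gT}).
Local Open Scope group_scope.

Lemma card_coset_fiber (K : {group gT}) :
  K <| G -> {in G / K, forall a, #|[set x in G | coset K x == a]| = #|K|}.
Proof.
case/andP=> sKG nKG a; rewrite -imset_coset => /imsetP[x Gx ->].
have Nx := subsetP nKG x Gx; rewrite -(card_rcoset K x).
apply: eq_card => y; rewrite inE.
apply/idP/idP => [/andP[Gy /eqP eyx] | /rcosetP[z Kz ->]].
  exact/(rcoset_kercosetP (subsetP nKG y Gy) Nx).
by rewrite groupM ?(subsetP sKG z) //= coset_kerl.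
Qed.

Lemma mem_repr_quotient (K : {group gT}) a : K <| G -> a \in G / K -> repr a \in G.
Proof.
case/andP=> sKG nKG; rewrite -imset_coset => /imsetP[x Gx ->].
have := mem_repr_coset (coset K x).
rewrite val_coset ?(subsetP nKG) // => /rcosetP[z Kz ->].
by rewrite groupM // (subsetP sKG).
Qed.

Lemma commg_centerM z1 z2 x y :
  z1 \in 'Z(G) -> z2 \in 'Z(G) -> x \in G -> y \in G -> [~ z1 * x, z2 * y] = [~ x, y].
Proof.
move=> /centerP[_ cz1] /centerP[Gz2 cz2] Gx Gy.
have /eqP z1C : [~ z1, z2 * y] == 1 by apply/commgP/cz1; rewrite groupM.
have /eqP z2C : [~ x, z2] == 1 by rewrite commg1_sym; apply/commgP/cz2.
by rewrite commMgJ z1C conj1g mul1g commgMJ z2C conj1g mulg1.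
Qed.

Lemma qcommb_coset :
  {in G &, forall x y, qcommb (coset 'Z(G) x) (coset 'Z(G) y) = commb x y}.
Proof.
have nZG : G \subset 'N('Z(G)) := normal_norm (center_normal G).
have repr_center x :
    x \in G -> exists2 z, z \in 'Z(G) & repr (coset 'Z(G) x) = z * x.
  by move=> Gx; apply/rcosetP; rewrite -val_coset ?(subsetP nZG) ?mem_repr_coset.
move=> x y Gx Gy; rewrite /qcommb /commb.
have [z1 Zz1 ->] := repr_center x Gx; have [z2 Zz2 ->] := repr_center y Gy.
by rewrite commg_centerM.
Qed.

End CentralQuotient.

Section OrbitCount.
Variables (gT : finGroupType) (n : nat) (b : bool).
Local Open Scope group_scope.

Definition qpattern_count (G : {group gT}) : nat :=
  \sum_(a in G / 'Z(G)) #|rel_tuples n qcommb b (G / 'Z(G)) a|.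

Lemma conj_orbits_mul_card (G : {group gT}) :
  (conj_orbits n b G * #|G| = #|'Z(G)| ^ n.+1 * qpattern_count G)%N.
Proof.
have coset_into : {in G, forall x, coset 'Z(G) x \in G / 'Z(G)}.
  by move=> x /mem_quotient.
have fiber := card_coset_fiber (center_normal G).
pose F a := #|rel_tuples n qcommb b (G / 'Z(G)) a|.
rewrite -(Frobenius_Cauchy (conj_domain_acts n b G)).
rewrite (eq_bigr (fun g => #|'Z(G)| ^ n * F (coset 'Z(G) g))%N) => [|g Gg].
  by rewrite -big_distrr (sum_fibers coset_into fiber F) /= mulnA -expnSr.
rewrite afix_conj_domain.
by rewrite (card_rel_tuples_fibers coset_into fiber _ _ (@qcommb_coset _ G)).
Qed.

End OrbitCount.

Lemma conj_orbits_ratio (R : numFieldType) (gT : finGroupType) n b (G : {group gT}) :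
  ((conj_orbits n b G)%:R / #|G|%:R ^+ n
   = (qpattern_count n b G)%:R / #|(G / 'Z(G))%g|%:R ^+ n.+1 :> R)%R.
Proof.
have cardG : #|G| = (#|'Z(G)%g| * #|(G / 'Z(G))%g|)%N.
  by rewrite card_quotient ?normal_norm ?center_normal // Lagrange ?center_sub.
move: (conj_orbits_mul_card n b G); rewrite cardG.
set a := conj_orbits n b G; set z := #|'Z(G)%g|; set q := #|(G / 'Z(G))%g|.
set S := qpattern_count n b G => count.
have z0 : (z%:R != 0 :> R)%R by rewrite pnatr_eq0 -lt0n cardG_gt0.
have q0 : (q%:R != 0 :> R)%R by rewrite pnatr_eq0 -lt0n cardG_gt0.
have -> : (S%:R = a%:R * (z * q)%:R / z%:R ^+ n.+1 :> R)%R.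
  by rewrite -natrM count natrM natrX mulrC mulKf // expf_neq0.
rewrite natrM exprMn !exprS; field.
by rewrite z0 q0 !expf_neq0.
Qed.

Section Isomorphism.
Variables (aT rT : finGroupType) (A : {group aT}) (B : {group rT}).
Variable f : {morphism A >-> rT}.
Hypothesis isoAB : isom A B f.

Lemma mem_isom x : x \in A -> f x \in B.
Proof. by move=> Ax; rewrite -(isom_im isoAB) mem_morphim. Qed.

Lemma card_isom_fiber : {in B, forall y, #|[set x in A | f x == y]| = 1}.
Proof.
move=> y; rewrite -(isom_im isoAB) => /morphimP[x _ Ax ->].
apply/eqP/cards1P; exists x; apply/setP => x'; rewrite !inE.
apply/andP/eqP => [[Ax' /eqP] | ->]; last by rewrite Ax eqxx.
exact: (injmP (isom_inj isoAB)).
Qed.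

End Isomorphism.

Section Isoclinism.
Variables (gT hT : finGroupType) (G : {group gT}) (H : {group hT}).
Local Open Scope group_scope.

Lemma isoclinic_qcommb :
    isoclinic G H ->
  exists2 theta : {morphism G / 'Z(G) >-> coset_of 'Z(H)},
    isom (G / 'Z(G)) (H / 'Z(H)) theta &
    {in G / 'Z(G) &, forall a c, qcommb (theta a) (theta c) = qcommb a c}.
Proof.
case=> theta [phi [isoQ isoD theta_comm]]; exists theta => // a c Qa Qc.
have theta_into := mem_isom isoQ.
have repr_G := mem_repr_quotient (center_normal G).
have repr_H := mem_repr_quotient (center_normal H).
have := theta_comm _ _ _ _ (repr_G _ Qa) (repr_G _ Qc)
  (repr_H _ (theta_into _ Qa)) (repr_H _ (theta_into _ Qc)).
rewrite !coset_reprK => /(_ erefl erefl) phi_comm.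
by rewrite /qcommb /commb -phi_comm morph_injm_eq1 ?(isom_inj isoD) ?mem_commg ?repr_G.
Qed.

Lemma qpattern_count_isoclinic n b :
  isoclinic G H -> qpattern_count n b H = qpattern_count n b G.
Proof.
case/isoclinic_qcommb => theta isoQ theta_comm.
have theta_into := mem_isom isoQ; have fiber := card_isom_fiber isoQ.
rewrite /qpattern_count -[LHS]mul1n -(sum_fibers theta_into fiber).
apply: eq_bigr => a Qa.
by rewrite (card_rel_tuples_fibers theta_into fiber _ _ theta_comm) // exp1n mul1n.
Qed.

End Isoclinism.

Theorem theorem4p8 (gT hT : finGroupType) (G : {group gT}) (H : {group hT}) :
  isoclinic G H ->
  (forall n : nat,
     ((alpha G n)%:R / (#|G|%:R ^+ n) = (alpha H n)%:R / (#|H|%:R ^+ n) :> rat)%R) /\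
  (forall n : nat,
     ((beta G n)%:R / (#|G|%:R ^+ n) = (beta H n)%:R / (#|H|%:R ^+ n) :> rat)%R).
Proof.
move=> isoGH; have [theta isoQ _] := isoclinic_qcommb isoGH.
suff orbitsE n b : ((conj_orbits n b G)%:R / #|G|%:R ^+ n
                    = (conj_orbits n b H)%:R / #|H|%:R ^+ n :> rat)%R.
  by split=> n; [exact: orbitsE n false | exact: orbitsE n true].
by rewrite !conj_orbits_ratio (isom_card isoQ) (qpattern_count_isoclinic n b isoGH).
Qed.
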